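(* Let $p:X\to Y$ be a factor map between topological spaces and $\Delta=\{p^{-1}(y): y\in Y\}$. If $p$ has property (COMP), then $p$ has property (CONT).
   Context: A factor map $p:X\to Y$ is a surjective map such that $A\subset Y$ is open iff $p^{-1}(A)$ is open in $X$. A $\Delta$-map is a continuous map $h:X\to X$ such that for each $\omega\in\Delta$, $h(\omega)$ is contained in some element of $\Delta$; $\mathrm{End}(X,\Delta)$ is the monoid of all $\Delta$-maps and $\mathrm{End}(Y)=C(Y,Y)$ the monoid of continuous self-maps of $Y$. For $h\in\mathrm{End}(X,\Delta)$, $\psi(h):Y\to Y$ is the unique map with $p\circ h=\psi(h)\circ p$ (it is continuous). Property (COMP): for every compact $L\subset Y$ there is a compact $K\subset X$ with $p(K)=L$. Property (CONT): the map $\psi:\mathrm{End}(X,\Delta)\to\mathrm{End}(Y)$ is continuous with respect to the compact open topologies (generated by subbasic sets $\{f: f(K)\subset U\}$, $K$ compact, $U$ open). *)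

From mathcomp Require Import all_boot.
From mathcomp Require Import boolp classical_sets topology.
Set Implicit Arguments. Unset Strict Implicit. Unset Printing Implicit Defensive.
Local Open Scope classical_set_scope.

(* A set A of self-maps of T is open in the subspace D (of the space of all
   self-maps T -> T) for the compact-open topology, i.e. the topology
   generated by the subbasic sets [set f | f @` K `<=` U], K compact, U open:
   every f in A has a finite intersection of subbasic neighbourhoods whose
   trace on D lies inside A. *)
Definition co_open {T : topologicalType} (D A : set (T -> T)) : Prop :=
  A `<=` D /\
  forall f, A f ->
    exists (n : nat) (K U : nat -> set T),
      (forall i, (i < n)%N -> [/\ compact (K i), open (U i) & f @` K i `<=` U i]) /\
      (forall g, D g -> (forall i, (i < n)%N -> g @` K i `<=` U i) -> A g).

Definition factor_map {X Y : topologicalType} (p : X -> Y) : Prop :=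
  (forall y, exists x, p x = y) /\
  (forall A : set Y, open A <-> open (p @^-1` A)).

(* Delta-maps for Delta = {p^-1(y) : y in Y}; this is End(X, Delta) *)
Definition Delta_map {X Y : topologicalType} (p : X -> Y) (h : X -> X) : Prop :=
  continuous h /\
  forall y : Y, exists y' : Y, h @` (p @^-1` [set y]) `<=` p @^-1` [set y'].

Definition EndY {Y : topologicalType} : set (Y -> Y) := [set g | continuous g].

(* psi(h) = g  iff  p \o h = g \o p  (g is unique since p is surjective) *)
Definition is_psi {X Y : topologicalType} (p : X -> Y) (h : X -> X) (g : Y -> Y) :=
  p \o h = g \o p.

Definition COMP {X Y : topologicalType} (p : X -> Y) : Prop :=
  forall L : set Y, compact L -> exists K : set X, compact K /\ p @` K = L.

(* psi : End(X,Delta) -> End(Y) is continuous for the compact-open topologies: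
   the preimage of every open set B of End(Y) is open in End(X,Delta). *)
Definition CONT {X Y : topologicalType} (p : X -> Y) : Prop :=
  forall B : set (Y -> Y), co_open EndY B ->
    co_open (Delta_map p) [set h | Delta_map p h /\ exists g, is_psi p h g /\ B g].

From mathcomp Require Import all_boot.
From mathcomp Require Import boolp classical_sets topology.
Set Implicit Arguments. Unset Strict Implicit. Unset Printing Implicit Defensive.
Local Open Scope classical_set_scope.

(* Let p : X -> Y be a factor map with property (COMP), and let h be a
   Delta-map with psi(h) = g in a compact-open open set B of End(Y).  Pick a
   finite family of subbasic neighbourhoods [g(K_i) <= U_i] of g inside B.
   By (COMP) each K_i is the image p(L_i) of a compact L_i of X, and the
   relation p \o h = g \o p turns g(K_i) <= U_i into h(L_i) <= p^-1(U_i),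
   a subbasic condition on X since p is continuous.  Conversely, for a
   Delta-map h' satisfying all h'(L_i) <= p^-1(U_i), the map psi(h')
   exists (p is onto and h' respects the fibres), is continuous (p is a
   quotient map), and satisfies psi(h')(K_i) <= U_i, hence lies in B. *)

Section FactorMap.
Variables (X Y : topologicalType) (p : X -> Y).

Lemma factor_map_continuous : factor_map p -> continuous p.
Proof. by move=> [_ openE]; apply/continuousP => A /openE. Qed.

Lemma factor_map_lift_continuous (Z : topologicalType) (g : Y -> Z) :
  factor_map p -> continuous (g \o p) -> continuous g.
Proof.
move=> [_ openE] /continuousP gp_cont; apply/continuousP => A oA.
by apply/openE; exact: gp_cont.
Qed.

(* psi(h) exists for every Delta-map h when p is onto: it sends p x to
   p (h x), which is well defined because h maps fibres into fibres. *)
Lemma Delta_map_psi (h : X -> X) :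
  (forall y, exists x, p x = y) -> Delta_map p h -> exists g, is_psi p h g.
Proof.
move=> surj [_ fibreP].
pose s y := projT1 (cid (surj y)).
have sK y : p (s y) = y by rewrite /s; case: (cid _).
exists (fun y => p (h (s y))); apply: funext => x /=.
have [y' fibre_y'] := fibreP (p x).
have -> : p (h x) = y' by apply: fibre_y'; exists x.
by symmetry; apply: fibre_y'; exists (s (p x)).
Qed.

Lemma psi_image_subset (h : X -> X) (g : Y -> Y) (L : set X) (K U : set Y) :
  is_psi p h g -> p @` L = K -> (g @` K `<=` U <-> h @` L `<=` p @^-1` U).
Proof.
move=> hg <-; split.
- move=> gKU _ [x Lx <-] /=.
  have -> : p (h x) = (g \o p) x by rewrite -hg.
  by apply: gKU; exists (p x) => //; exists x.
- move=> hLU _ [_ [x Lx <-] <-].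
  have -> : g (p x) = (p \o h) x by rewrite hg.
  by apply: hLU; exists x.
Qed.

Lemma COMP_lift_family (K : nat -> set Y) :
  COMP p -> exists L : nat -> set X,
    forall i, compact (K i) -> compact (L i) /\ p @` L i = K i.
Proof.
move=> comp.
exists (fun i => match pselect (compact (K i)) with
  | left cK => projT1 (cid (comp _ cK)) | right _ => set0 end).
move=> i cK; case: pselect => // cK'.
by case: (cid _).
Qed.

End FactorMap.

Theorem mainTheorem4 (X Y : topologicalType) (p : X -> Y) :
  factor_map p -> COMP p -> CONT p.
Proof.
move=> fp comp B [BD Bopen]; split; first by move=> h [].
move=> h [hD [g [hg Bg]]].
have p_cont := factor_map_continuous fp.
have [n [K [U [gKU nbhdB]]]] := Bopen g Bg.
have [L liftL] := COMP_lift_family K comp.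
exists n, L, (fun i => p @^-1` U i); split.
  move=> i ni; have [cK oU gKiU] := gKU i ni; have [cL pL] := liftL i cK.
  split => //; first by move/continuousP: p_cont; apply.
  by rewrite -(psi_image_subset _ hg pL).
move=> h' h'D h'LU; split => //.
have [g' hg'] := Delta_map_psi fp.1 h'D.
exists g'; split => //; apply: nbhdB.
  apply: (factor_map_lift_continuous fp); rewrite -hg'.
  by move=> x; exact: continuous_comp (h'D.1 x) (p_cont _).
move=> i ni; have [cK _ _] := gKU i ni; have [_ pL] := liftL i cK.
by rewrite (psi_image_subset _ hg' pL); exact: h'LU.
Qed.
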